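(* For every $n\ge1$ and $x\in(0,1/2]$, the function $G_n$ satisfies $$\frac{n}{x^{1/n}}\ \ge\ G_n(1/x)\ \ge\ \frac12\cdot\frac{n}{x^{1/n}}\quad\text{when } x\le 2^{-n},$$ $$2\log_2(1/x)\ \ge\ G_n(1/x)\ \ge\ 2+\log\frac{1}{2x}\quad\text{when } x>2^{-n},$$ and $\displaystyle\lim_{x\to0^+}\frac{G_n(1/x)}{n/x^{1/n}}=1$.
   Context: $\log$ is the natural logarithm. The function $G_n$ on $[2,\infty)$: for $n=1$, $G_1(1/x)=1/x$. For $n>1$, $G_n(2)=2$, and for every $\gamma>0$, $$x\,G_n(1/x)=\frac{\gamma n}{(1+\gamma)^n-1}\left[\frac{(1+\gamma)^{n-1}\gamma(n-1)}{(1+\gamma)^{n-1}-1}\right]^{1-1/n}\quad\text{where}\quad x=\frac{(1+\gamma)^{n-1}[\gamma(n-1)-1]+1}{[(1+\gamma)^{n-1}-1][(1+\gamma)^n-1]}\in(0,1/2).$$ *)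

From Stdlib Require Import Reals Lra ClassicalEpsilon.
From Coquelicot Require Import Coquelicot.
Open Scope R_scope.

(* The parameter x(gamma) in (0,1/2) from the parametric definition of G_n. *)
Definition xpar (n : nat) (g : R) : R :=
  ((1 + g) ^ (n - 1) * (g * INR (n - 1) - 1) + 1) /
  (((1 + g) ^ (n - 1) - 1) * ((1 + g) ^ n - 1)).

(* The value x * G_n(1/x) at x = xpar n g. *)
Definition xGpar (n : nat) (g : R) : R :=
  g * INR n / ((1 + g) ^ n - 1) *
  Rpower ((1 + g) ^ (n - 1) * g * INR (n - 1) / ((1 + g) ^ (n - 1) - 1))
         (1 - 1 / INR n).

(* G_n on [2, +oo): G_1(y) = y; for n > 1, G_n(2) = 2 and, for y = 1/x with
   x = xpar n g (g > 0), G_n(y) = y * xGpar n g.  The parameter g is chosen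
   by Hilbert's epsilon among the g > 0 with xpar n g = 1/y. *)
Definition G (n : nat) (y : R) : R :=
  if Nat.eqb n 1 then y
  else if Req_EM_T y 2 then 2
  else y * xGpar n (epsilon (inhabits 1) (fun g => 0 < g /\ xpar n g = / y)).

(* Write n = m + 1, a = 1 + g for the parameter g > 0, S_k = 1 + a + ... + a^(k-1) and
   T_m = sum_(j<m) (j+1) a^j.  Then x = T_m / (S_m S_n), which decreases from 1/2 as a grows,
   and G_n(1/x) x^(1/n) / n = rho with rho^n = u^m / (S_n w^m), where w = T_m / S_m and
   u = m a^m / S_m = 1 + g w.  Comparing these sums gives g/a <= rho <= 1; this yields both
   power bounds (for x <= 2^-n one has a >= 2) and the limit (a -> oo as x -> 0).

   For the logarithmic upper bound, x G_n(1/x) is the minimum over c > 0 of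
   n c / q (1 + x q)^(1 - 1/n) with q = (1 + c)^n - 1, the critical point being c = g.  Taking
   c -> 0 or c = (1 + 1/x)^(1/n) - 1 and using convexity of exp gives 2 log2 (1/x).
   The logarithmic lower bound follows from a^n = 1 + (u - 1)/x by comparing a with
   (1 + 2(u - 1))^(1/n) and (1/(2x))^(1/n), using the concavity of t^(1 - 1/n). *)

From Stdlib Require Import Reals Lra Lia Psatz ClassicalEpsilon.
From Coquelicot Require Import Coquelicot.
Open Scope R_scope.

Fixpoint gsum (k : nat) (a : R) : R :=
  match k with O => 0 | S k' => gsum k' a + a ^ k' end.

Fixpoint wsum (k : nat) (a : R) : R :=
  match k with O => 0 | S k' => wsum k' a + INR (S k') * a ^ k' end.

Fixpoint gsum_sum (k : nat) (a : R) : R :=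
  match k with O => 0 | S k' => gsum_sum k' a + gsum k' a end.

Fixpoint homog_sum (c d : R) (k : nat) : R :=
  match k with O => 0 | S k' => c ^ k' + d * homog_sum c d k' end.

Lemma gsum_S k a : gsum (S k) a = gsum k a + a ^ k. Proof. reflexivity. Qed.
Lemma wsum_S k a : wsum (S k) a = wsum k a + INR (S k) * a ^ k. Proof. reflexivity. Qed.
Lemma gsum_sum_S k a : gsum_sum (S k) a = gsum_sum k a + gsum k a. Proof. reflexivity. Qed.

Lemma gsum_geom k a : (a - 1) * gsum k a = a ^ k - 1.
Proof. induction k as [|k IH]; simpl; [ring|]. rewrite Rmult_plus_distr_l, IH. ring. Qed.

Lemma wsum_geom k a : (a - 1) * wsum k a = INR k * a ^ k - gsum k a.
Proof.
  induction k as [|k IH]; [simpl; ring|].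
  rewrite wsum_S, gsum_S, Rmult_plus_distr_l, IH, S_INR. simpl. ring.
Qed.

Lemma gsum_sum_geom k a : (a - 1) * gsum_sum k a = gsum k a - INR k.
Proof.
  induction k as [|k IH]; [simpl; ring|].
  rewrite gsum_sum_S, gsum_S, Rmult_plus_distr_l, IH, S_INR, gsum_geom. ring.
Qed.

Lemma homog_sum_geom c d k : (c - d) * homog_sum c d k = c ^ k - d ^ k.
Proof.
  induction k as [|k IH]; simpl; [ring|].
  transitivity ((c - d) * c ^ k + d * ((c - d) * homog_sum c d k)); [ring|].
  rewrite IH. ring.
Qed.

Lemma gsum_closed k a : a <> 1 -> gsum k a = (a ^ k - 1) / (a - 1).
Proof. intros. rewrite <- (gsum_geom k a). field. lra. Qed.

Lemma wsum_closed k a : a <> 1 ->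
  wsum k a = (INR k * a ^ k - (a ^ k - 1) / (a - 1)) / (a - 1).
Proof. intros. rewrite <- (gsum_closed k a), <- (wsum_geom k a) by auto. field. lra. Qed.

Lemma gsum_sum_closed k a : a <> 1 ->
  gsum_sum k a = ((a ^ k - 1) / (a - 1) - INR k) / (a - 1).
Proof. intros. rewrite <- (gsum_closed k a), <- (gsum_sum_geom k a) by auto. field. lra. Qed.

Lemma gsum_ge0 k a : 0 <= a -> 0 <= gsum k a.
Proof. intros Ha. induction k; simpl; [lra|]. pose proof (pow_le a k Ha). lra. Qed.

Lemma gsum_ge1 k a : 0 <= a -> (1 <= k)%nat -> 1 <= gsum k a.
Proof.
  intros Ha Hk. induction k as [|k IH]; [lia|]. rewrite gsum_S.
  destruct k; [simpl; lra|].
  pose proof (pow_le a (S k) Ha). specialize (IH ltac:(lia)). lra.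
Qed.

Lemma gsum_pos k a : 0 <= a -> (1 <= k)%nat -> 0 < gsum k a.
Proof. intros. pose proof (gsum_ge1 k a H H0). lra. Qed.

Lemma pow_le_gsum_S k a : 0 <= a -> a ^ k <= gsum (S k) a.
Proof. intros. simpl. pose proof (gsum_ge0 k a H). lra. Qed.

Lemma gsum_le_pow k a : 1 <= a -> gsum k a <= INR k * a ^ k.
Proof.
  intros Ha. induction k as [|k IH]; [simpl; lra|]. rewrite gsum_S, S_INR. simpl pow.
  pose proof (pos_INR k). pose proof (pow_le a k ltac:(lra)).
  assert (a ^ k <= a * a ^ k) by nra.
  assert (INR k * a ^ k <= INR k * (a * a ^ k)) by (apply Rmult_le_compat_l; lra).
  lra.
Qed.

Lemma gsum_incr k a b : 0 <= a <= b -> gsum k a <= gsum k b.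
Proof.
  intros H. induction k; simpl; [lra|].
  assert (a ^ k <= b ^ k) by (apply pow_incr; lra). lra.
Qed.

Lemma gsum_sum_ge0 k a : 0 <= a -> 0 <= gsum_sum k a.
Proof. intros Ha. induction k; simpl; [lra|]. pose proof (gsum_ge0 k a Ha). lra. Qed.

Lemma gsum_sum_incr k a b : 0 <= a <= b -> gsum_sum k a <= gsum_sum k b.
Proof. intros H. induction k; simpl; [lra|]. pose proof (gsum_incr k a b H). lra. Qed.

Lemma wsum_ge0 k a : 0 <= a -> 0 <= wsum k a.
Proof.
  intros Ha. induction k; [simpl; lra|]. rewrite wsum_S.
  pose proof (pow_le a k Ha). pose proof (pos_INR (S k)). nra.
Qed.

Lemma gsum_le_wsum k a : 0 <= a -> gsum k a <= wsum k a.
Proof.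
  intros Ha. induction k; [simpl; lra|]. rewrite wsum_S, gsum_S, S_INR.
  pose proof (pow_le a k Ha). pose proof (pos_INR k). nra.
Qed.

Lemma mul_wsum_le k a : 1 <= a -> a * wsum k a <= INR k * INR k * a ^ k.
Proof.
  intros Ha. induction k as [|k IH]; [simpl; lra|]. rewrite wsum_S, S_INR. simpl pow.
  pose proof (pos_INR k). pose proof (pow_le a k ltac:(lra)).
  assert (INR k * INR k * a ^ k <= INR k * INR k * (a * a ^ k)) by (apply Rmult_le_compat_l; nra).
  assert (0 <= INR k * (a * a ^ k)) by (apply Rmult_le_pos; nra).
  nra.
Qed.

Lemma pow_le_mul_wsum k a : 0 < a -> INR k * a ^ k <= a * wsum k a.
Proof.
  intros Ha. destruct k as [|k]; [simpl; lra|]. rewrite wsum_S. simpl pow.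
  pose proof (wsum_ge0 k a ltac:(lra)). pose proof (pos_INR (S k)). pose proof (pow_le a k ltac:(lra)).
  nra.
Qed.

Lemma gsum_1 k : gsum k 1 = INR k.
Proof. induction k as [|k IH]; [simpl; lra|]. rewrite gsum_S, IH, pow1, S_INR. ring. Qed.

Lemma wsum_1 k : wsum k 1 = INR k * (INR k + 1) / 2.
Proof. induction k as [|k IH]; [simpl; lra|]. rewrite wsum_S, IH, pow1, S_INR. field. Qed.

Lemma pow_lt_compat a b k : 0 <= a < b -> (1 <= k)%nat -> a ^ k < b ^ k.
Proof.
  intros H Hk. induction k as [|k IH]; [lia|]. destruct k; [simpl; lra|].
  specialize (IH ltac:(lia)). pose proof (pow_le a (S k) ltac:(lra)).
  change (a * a ^ S k < b * b ^ S k). apply Rmult_le_0_lt_compat; lra.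
Qed.

Lemma pow_le_reg a b k : 0 <= a -> 0 <= b -> (1 <= k)%nat -> a ^ k <= b ^ k -> a <= b.
Proof.
  intros Ha Hb Hk H. destruct (Rle_lt_dec a b) as [|Hba]; auto.
  pose proof (pow_lt_compat b a k ltac:(lra) Hk). lra.
Qed.

Definition nroot (n : nat) (y : R) : R := Rpower y (1 / INR n).

Lemma nroot_pos n y : 0 < nroot n y.
Proof. apply exp_pos. Qed.

Lemma nroot_exp n y : 0 < y -> nroot n y = exp (ln y / INR n).
Proof. intros. unfold nroot, Rpower. f_equal. unfold Rdiv. ring. Qed.

Lemma nroot_pow n y : (1 <= n)%nat -> 0 < y -> nroot n y ^ n = y.
Proof.
  intros Hn Hy. unfold nroot. rewrite <- Rpower_pow by apply exp_pos.
  rewrite Rpower_mult. replace (1 / INR n * INR n) with 1 by (field; apply not_0_INR; lia).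
  apply Rpower_1; auto.
Qed.

Lemma nroot_le_of_pow n y z : (1 <= n)%nat -> 0 < y -> 0 <= z -> y <= z ^ n -> nroot n y <= z.
Proof.
  intros. apply (pow_le_reg _ _ n); auto. left; apply nroot_pos. rewrite nroot_pow; auto.
Qed.

Lemma nroot_incr n y z : (1 <= n)%nat -> 0 < y -> y <= z -> nroot n y <= nroot n z.
Proof.
  intros. apply nroot_le_of_pow; auto. left; apply nroot_pos. rewrite nroot_pow by (auto; lra). lra.
Qed.

Lemma nroot_gt1 n y : (1 <= n)%nat -> 1 < y -> 1 < nroot n y.
Proof.
  intros Hn Hy. destruct (Rle_lt_dec (nroot n y) 1) as [Hle|]; auto.
  assert (nroot n y ^ n <= 1 ^ n) by (apply pow_incr; pose proof (nroot_pos n y); lra).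
  rewrite pow1, nroot_pow in H by (auto; lra). lra.
Qed.

Lemma nroot_mult n y z : 0 < y -> 0 < z -> nroot n (y * z) = nroot n y * nroot n z.
Proof. intros. unfold nroot. rewrite Rpower_mult_distr; auto. Qed.

Lemma ln_le_mul_nroot_sub1 n y : (1 <= n)%nat -> 0 < y -> ln y <= INR n * (nroot n y - 1).
Proof.
  intros Hn Hy. assert (0 < INR n) by (apply lt_0_INR; lia).
  rewrite nroot_exp by auto. pose proof (exp_ineq1_le (ln y / INR n)).
  replace (ln y) with (INR n * (ln y / INR n)) at 1 by (field; lra).
  apply Rmult_le_compat_l; lra.
Qed.

Lemma Rpower_conj_pow m u : 0 < u ->
  Rpower u (1 - 1 / INR (S m)) ^ S m = u ^ m.
Proof.
  intros Hu. rewrite <- Rpower_pow by apply exp_pos. rewrite Rpower_mult, <- Rpower_pow by auto.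
  f_equal. rewrite S_INR. pose proof (pos_INR m). field. lra.
Qed.

Lemma nroot_pow_pred m y : 0 < y -> nroot (S m) y ^ m = Rpower y (1 - 1 / INR (S m)).
Proof.
  intros Hy. unfold nroot. rewrite <- Rpower_pow by apply exp_pos. rewrite Rpower_mult.
  f_equal. rewrite S_INR. pose proof (pos_INR m). field. lra.
Qed.

Lemma Rpower_conj_nroot n u : 0 < u -> Rpower u (1 - 1 / INR n) = u / nroot n u.
Proof. intros Hu. unfold nroot, Rminus. rewrite Rpower_plus, Rpower_Ropp, Rpower_1; auto. Qed.

Lemma exp_convex l A B : 0 <= l <= 1 ->
  exp ((1 - l) * A + l * B) <= (1 - l) * exp A + l * exp B.
Proof.
  intros Hl. set (C := (1 - l) * A + l * B).
  assert (Htan : forall D, exp C * (1 + (D - C)) <= exp D).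
  { intros D. replace (exp D) with (exp C * exp (D - C)) by (rewrite <- exp_plus; f_equal; ring).
    pose proof (exp_ineq1_le (D - C)). pose proof (exp_pos C). nra. }
  pose proof (Htan A). pose proof (Htan B).
  assert ((1 - l) * (exp C * (1 + (A - C))) + l * (exp C * (1 + (B - C))) = exp C) by (unfold C; ring).
  nra.
Qed.

Lemma Rpower_le_tangent z p : 0 < z -> 0 <= p <= 1 -> Rpower z p <= 1 + p * (z - 1).
Proof.
  intros Hz Hp. unfold Rpower. replace (p * ln z) with ((1 - p) * 0 + p * ln z) by ring.
  eapply Rle_trans; [apply exp_convex; auto|]. rewrite exp_0, exp_ln; auto. lra.
Qed.

Lemma Rpower_midpoint_concave y z p : 0 < y -> 0 < z -> 0 <= p <= 1 ->
  Rpower y p + Rpower z p <= 2 * Rpower ((y + z) / 2) p.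
Proof.
  intros Hy Hz Hp. set (M := (y + z) / 2).
  assert (HM : 0 < M) by (unfold M; lra).
  assert (Hsplit : forall v, 0 < v -> Rpower v p = Rpower M p * Rpower (v / M) p).
  { intros v Hv. rewrite Rpower_mult_distr by (try apply Rdiv_lt_0_compat; lra). f_equal. field. lra. }
  rewrite (Hsplit y), (Hsplit z) by auto.
  pose proof (Rpower_le_tangent (y / M) p ltac:(apply Rdiv_lt_0_compat; lra) Hp).
  pose proof (Rpower_le_tangent (z / M) p ltac:(apply Rdiv_lt_0_compat; lra) Hp).
  assert (Hcancel : p * (y / M - 1) + p * (z / M - 1) = 0).
  { replace (z / M) with (2 - y / M) by (unfold M; field; lra). ring. }
  assert (Hsum : Rpower (y / M) p + Rpower (z / M) p <= 2) by lra.
  rewrite <- Rmult_plus_distr_l, Rmult_comm. apply Rmult_le_compat_r; [left; apply exp_pos | exact Hsum].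
Qed.

Lemma INR_S_pos m : 0 < INR (S m).
Proof. apply lt_0_INR. lia. Qed.

Lemma gsum_S_le_mean k d : 1 <= d -> 2 * gsum (S k) d <= INR (S k) * (1 + d ^ k).
Proof.
  intros Hd. induction k as [|k IH]; [simpl; lra|].
  rewrite (gsum_S (S k)), !S_INR in *.
  assert (Hk : (d - 1) * gsum k d <= (d - 1) * (INR k * d ^ k))
    by (apply Rmult_le_compat_l; [lra | apply gsum_le_pow; lra]).
  rewrite gsum_geom in Hk.
  assert (Hkey : (INR k + 1) * d ^ k <= 1 + INR k * d ^ S k) by (simpl pow; nra).
  lra.
Qed.

Lemma homog_sum_ge0 c d k : 0 <= c -> 0 <= d -> 0 <= homog_sum c d k.
Proof. intros Hc Hd. induction k; simpl; [lra|]. pose proof (pow_le c k Hc). nra. Qed.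

Lemma homog_sum_le c d t b k : 0 <= c -> 0 <= d -> 0 <= t -> 0 <= b ->
  c <= b * t -> d <= b -> b * homog_sum c d k <= b ^ k * gsum k t.
Proof.
  intros Hc Hd Ht Hb Hcb Hdb. induction k as [|k IH]; [simpl; lra|].
  rewrite gsum_S. simpl.
  assert (Hck : c ^ k <= b ^ k * t ^ k) by (rewrite <- Rpow_mult_distr; apply pow_incr; lra).
  pose proof (homog_sum_ge0 c d k Hc Hd). pose proof (pow_le b k Hb).
  assert (d * (b * homog_sum c d k) <= b * (b ^ k * gsum k t))
    by (apply Rmult_le_compat; try nra; pose proof (gsum_ge0 k t Ht); nra).
  nra.
Qed.

Section LogLowerBound.

Variable m : nat.
Variable r : R.
Hypothesis Hr : 0 < r.

Let n := S m.
Let p := 1 - 1 / INR n.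
Let Bp := Rpower (1 + r) p.
Let INR_n_pos : 0 < INR n := INR_S_pos m.

Let conj_exp_bounds : 0 <= p <= 1.
Proof.
  unfold p, n. rewrite S_INR. pose proof (pos_INR m).
  split; [|assert (0 < 1 / (INR m + 1)) by (apply Rdiv_lt_0_compat; lra); lra].
  assert (1 / (INR m + 1) <= 1) by (apply Rmult_le_reg_r with (INR m + 1); field_simplify; lra).
  lra.
Qed.

Lemma two_mul_le_nroot_sub1 : 2 * r <= INR n * Bp * (nroot n (1 + 2 * r) - 1).
Proof.
  set (d := nroot n (1 + 2 * r)).
  assert (Hd : d ^ n = 1 + 2 * r) by (apply nroot_pow; unfold n; lia || lra).
  assert (Hd1 : 1 < d) by (apply nroot_gt1; unfold n; lia || lra).
  assert (Hmean : 1 + d ^ m <= 2 * Bp).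
  { replace (d ^ m) with (Rpower (1 + 2 * r) p) by (unfold d, p, n; rewrite nroot_pow_pred; lra).
    replace 1 with (Rpower 1 p) at 1 by (unfold Rpower; rewrite ln_1, Rmult_0_r; apply exp_0).
    unfold Bp. replace (1 + r) with ((1 + (1 + 2 * r)) / 2) by field.
    apply Rpower_midpoint_concave; [lra | lra | apply conj_exp_bounds]. }
  pose proof (gsum_S_le_mean m d ltac:(lra)) as Hgsum. fold n in Hgsum.
  pose proof (gsum_geom n d) as Hgeom. rewrite Hd in Hgeom.
  assert (gsum n d <= INR n * Bp).
  { pose proof (pos_INR n). assert (INR n * (1 + d ^ m) <= INR n * (2 * Bp)) by (apply Rmult_le_compat_l; lra). lra. }
  assert ((d - 1) * gsum n d <= (d - 1) * (INR n * Bp)) by (apply Rmult_le_compat_l; lra).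
  lra.
Qed.

Variables c s : R.
Hypothesis Hs : 2 < s.
Hypothesis Hc : 1 < c.
Hypothesis Hcn : c ^ n = 1 + r * s.

Lemma mul_nroot_sub1_le_sub_nroot :
  r * (nroot n (s / 2) - 1) <= (c - nroot n (1 + 2 * r)) * Bp.
Proof.
  set (d := nroot n (1 + 2 * r)). set (t := nroot n (s / 2)). set (b := nroot n (2 * (1 + r))).
  assert (Hn : (1 <= n)%nat) by (unfold n; lia).
  assert (Hd : d ^ n = 1 + 2 * r) by (apply nroot_pow; auto; lra).
  assert (Ht : t ^ n = s / 2) by (apply nroot_pow; auto; lra).
  assert (Hb : b ^ n = 2 * (1 + r)) by (apply nroot_pow; auto; lra).
  assert (Ht1 : 1 < t) by (apply nroot_gt1; auto; lra).
  assert (Hb0 : 0 < b) by apply nroot_pos.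
  assert (Hd0 : 0 < d) by apply nroot_pos.
  assert (Hcb : c <= b * t).
  { apply (pow_le_reg _ _ n); auto; try nra. rewrite Rpow_mult_distr, Hb, Ht, Hcn. nra. }
  assert (Hdb : d <= b) by (apply (pow_le_reg _ _ n); auto; lra).
  assert (Hdc : d < c).
  { destruct (Rle_lt_dec c d) as [Hle|]; auto.
    assert (c ^ n <= d ^ n) by (apply pow_incr; lra). nra. }
  assert (Hbm : b ^ m <= 2 * Bp).
  { replace (b ^ m) with (Rpower (2 * (1 + r)) p) by (unfold b, p, n; rewrite nroot_pow_pred; lra).
    rewrite <- Rpower_mult_distr by lra. unfold Bp.
    apply Rmult_le_compat_r; [left; apply exp_pos|].
    rewrite <- (Rpower_1 2) at 2 by lra. apply Rle_Rpower; [lra | apply conj_exp_bounds]. }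
  pose proof (homog_sum_le c d t b n ltac:(lra) ltac:(lra) ltac:(lra) ltac:(lra) Hcb Hdb) as Hhom.
  pose proof (gsum_pos n t ltac:(lra) Hn) as Hgt.
  assert (Hhs : homog_sum c d n <= 2 * Bp * gsum n t).
  { change (b ^ n) with (b * b ^ m) in Hhom.
    apply Rmult_le_reg_l with b; auto.
    assert (b * b ^ m * gsum n t <= b * (2 * Bp) * gsum n t)
      by (apply Rmult_le_compat_r; [lra | apply Rmult_le_compat_l; lra]).
    lra. }
  pose proof (homog_sum_geom c d n) as Hhg. rewrite Hd, Hcn in Hhg.
  pose proof (gsum_geom n t) as Htg. rewrite Ht in Htg.
  assert (r * (s - 2) <= (c - d) * (2 * Bp * gsum n t))
    by (replace (r * (s - 2)) with ((c - d) * homog_sum c d n) by lra;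
        apply Rmult_le_compat_l; lra).
  replace (s - 2) with (2 * ((t - 1) * gsum n t)) in H by lra.
  apply Rmult_le_reg_r with (2 * gsum n t); [lra|]. nra.
Qed.

Lemma two_add_ln_le : 2 + ln (s / 2) <= INR n * (c - 1) * Bp / r.
Proof.
  pose proof two_mul_le_nroot_sub1 as HA. pose proof mul_nroot_sub1_le_sub_nroot as HB.
  pose proof (ln_le_mul_nroot_sub1 n (s / 2) ltac:(unfold n; lia) ltac:(lra)) as Hln.
  pose proof INR_n_pos.
  assert (INR n * (r * (nroot n (s / 2) - 1)) <= INR n * ((c - nroot n (1 + 2 * r)) * Bp))
    by (apply Rmult_le_compat_l; lra).
  apply Rmult_le_reg_r with r; auto. unfold Rdiv. rewrite Rmult_assoc, Rinv_l, Rmult_1_r by lra.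
  nra.
Qed.

End LogLowerBound.

Definition xparam (m : nat) (a : R) : R := wsum m a / (gsum m a * gsum (S m) a).

Lemma xpar_eq_xparam m g : (1 <= m)%nat -> 0 < g -> xpar (S m) g = xparam m (1 + g).
Proof.
  intros Hm Hg. unfold xpar, xparam. replace (S m - 1)%nat with m by lia.
  rewrite !gsum_closed, wsum_closed by lra. simpl pow.
  replace (1 + g - 1) with g by ring.
  assert (1 < (1 + g) ^ m) by (apply Rlt_pow_R1; [lra | lia]).
  assert (0 < g * (1 + g) ^ m) by (apply Rmult_lt_0_compat; lra).
  field. repeat split; lra.
Qed.

Lemma gsum_mul_gsum_S m a : a <> 1 ->
  gsum m a * gsum (S m) a = wsum m a + a ^ m * gsum_sum (S m) a.
Proof.
  intros H. rewrite !gsum_closed, wsum_closed, gsum_sum_closed by auto. rewrite S_INR. simpl pow.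
  field. lra.
Qed.

Definition wsum_div_pow (k : nat) (a : R) : R := wsum k a / a ^ k.

Lemma wsum_div_pow_S k a : 0 < a ->
  wsum_div_pow (S k) a = (wsum_div_pow k a + INR (S k)) / a.
Proof.
  intros. unfold wsum_div_pow. rewrite wsum_S. simpl pow.
  assert (a ^ k <> 0) by (apply pow_nonzero; lra). field. split; lra.
Qed.

Lemma wsum_div_pow_ge0 k a : 0 < a -> 0 <= wsum_div_pow k a.
Proof. intros. apply Rdiv_le_0_compat; [apply wsum_ge0; lra | apply pow_lt; lra]. Qed.

Lemma wsum_div_pow_pos k a : 0 < a -> (1 <= k)%nat -> 0 < wsum_div_pow k a.
Proof.
  intros. apply Rdiv_lt_0_compat; [|apply pow_lt; lra].
  pose proof (gsum_le_wsum k a ltac:(lra)). pose proof (gsum_pos k a ltac:(lra) H0). lra.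
Qed.

Lemma wsum_div_pow_decr k a b : 0 < a <= b -> wsum_div_pow k b <= wsum_div_pow k a.
Proof.
  intros H. induction k as [|k IH]; [unfold wsum_div_pow; simpl; lra|].
  rewrite !wsum_div_pow_S by lra.
  pose proof (wsum_div_pow_ge0 k a ltac:(lra)). pose proof (pos_INR (S k)).
  apply Rle_trans with ((wsum_div_pow k a + INR (S k)) / b).
  - apply Rmult_le_compat_r; [left; apply Rinv_0_lt_compat|]; lra.
  - apply Rmult_le_compat_l; [lra|]. apply Rinv_le_contravar; lra.
Qed.

(* Dividing numerator and denominator by [a ^ m] exhibits [xparam m] as decreasing:
   [wsum_div_pow m] decreases while [gsum_sum (S m)] increases. *)
Lemma xparam_eq m a : 1 < a -> (1 <= m)%nat ->
  xparam m a = wsum_div_pow m a / (wsum_div_pow m a + gsum_sum (S m) a).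
Proof.
  intros Ha Hm. unfold xparam. rewrite gsum_mul_gsum_S by lra. unfold wsum_div_pow.
  assert (0 < a ^ m) by (apply pow_lt; lra).
  pose proof (wsum_div_pow_pos m a ltac:(lra) Hm). unfold wsum_div_pow in H0.
  assert (0 < wsum m a) by (apply (Rmult_lt_reg_r (/ a ^ m)); [apply Rinv_0_lt_compat|]; lra).
  pose proof (gsum_sum_ge0 (S m) a ltac:(lra)).
  field. split; [lra | nra].
Qed.

Lemma xparam_decr m a b : (1 <= m)%nat -> 1 < a <= b -> xparam m b <= xparam m a.
Proof.
  intros Hm H. rewrite !xparam_eq by (auto; lra).
  pose proof (wsum_div_pow_decr m a b ltac:(lra)).
  pose proof (wsum_div_pow_pos m a ltac:(lra) Hm). pose proof (wsum_div_pow_pos m b ltac:(lra) Hm).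
  pose proof (gsum_sum_incr (S m) a b ltac:(lra)). pose proof (gsum_sum_ge0 (S m) a ltac:(lra)).
  apply Rmult_le_reg_r with
    ((wsum_div_pow m a + gsum_sum (S m) a) * (wsum_div_pow m b + gsum_sum (S m) b)); [nra|].
  field_simplify; nra.
Qed.

Lemma xparam_1 m : (1 <= m)%nat -> xparam m 1 = 1 / 2.
Proof.
  intros. unfold xparam. rewrite wsum_1, !gsum_1, S_INR.
  assert (0 < INR m) by (apply lt_0_INR; lia). field. lra.
Qed.

Lemma xparam_le m a : (1 <= m)%nat -> 1 <= a -> xparam m a <= INR m * INR m / a.
Proof.
  intros Hm Ha. unfold xparam.
  pose proof (mul_wsum_le m a Ha). pose proof (gsum_ge1 m a ltac:(lra) Hm).
  pose proof (pow_le_gsum_S m a ltac:(lra)). pose proof (pow_lt a m ltac:(lra)).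
  assert (0 < gsum m a * gsum (S m) a) by (apply Rmult_lt_0_compat; lra).
  apply (Rmult_le_reg_r (a * (gsum m a * gsum (S m) a))); [apply Rmult_lt_0_compat; lra|].
  replace (wsum m a / (gsum m a * gsum (S m) a) * (a * (gsum m a * gsum (S m) a)))
    with (a * wsum m a) by (field; lra).
  replace (INR m * INR m / a * (a * (gsum m a * gsum (S m) a)))
    with (INR m * INR m * (gsum m a * gsum (S m) a)) by (field; lra).
  assert (INR m * INR m * a ^ m <= INR m * INR m * (gsum m a * gsum (S m) a))
    by (apply Rmult_le_compat_l; [pose proof (pos_INR m); nra | nra]).
  lra.
Qed.

Lemma gsum_continuous k : continuity (gsum k).
Proof.
  induction k; [apply continuity_const; intros ? ?; auto|].
  apply (continuity_plus (gsum k) (fun a => a ^ k)); auto.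
  apply derivable_continuous, derivable_pow.
Qed.

Lemma wsum_continuous k : continuity (wsum k).
Proof.
  induction k; [apply continuity_const; intros ? ?; auto|].
  apply (continuity_plus (wsum k) (fun a => INR (S k) * a ^ k)); auto.
  apply continuity_scal, derivable_continuous, derivable_pow.
Qed.

Lemma xparam_continuous_pt m a : (1 <= m)%nat -> 0 < a -> continuity_pt (xparam m) a.
Proof.
  intros Hm Ha. apply continuity_pt_div; [apply wsum_continuous| |].
  - apply continuity_pt_mult; apply gsum_continuous.
  - pose proof (gsum_pos m a ltac:(lra) Hm). pose proof (gsum_pos (S m) a ltac:(lra) ltac:(lia)). nra.
Qed.

Lemma xparam_surjective m x : (1 <= m)%nat -> 0 < x < 1 / 2 ->
  exists g, 0 < g /\ xparam m (1 + g) = x.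
Proof.
  intros Hm Hx. set (A := INR m * INR m / x + 1).
  assert (0 < INR m) by (apply lt_0_INR; lia).
  assert (0 < INR m * INR m / x) by (apply Rdiv_lt_0_compat; nra).
  assert (HA : xparam m A < x).
  { eapply Rle_lt_trans; [apply xparam_le; unfold A; auto; lra|].
    apply (Rmult_lt_reg_r A); [unfold A; lra|].
    replace (INR m * INR m / A * A) with (INR m * INR m) by (field; unfold A; lra).
    unfold A. replace (x * (INR m * INR m / x + 1)) with (INR m * INR m + x) by (field; lra). lra. }
  destruct (Ranalysis5.IVT_interv (fun a => x - xparam m a) 1 A) as [z [Hz Hxz]].
  - intros a Ha. apply continuity_pt_minus; [apply continuity_pt_const; intros ? ?; auto|].
    apply xparam_continuous_pt; auto; lra.
  - unfold A; lra.
  - rewrite xparam_1 by auto. lra.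
  - lra.
  - exists (z - 1). replace (1 + (z - 1)) with z by ring. split; [|lra].
    destruct (Req_dec z 1) as [->|]; [rewrite xparam_1 in Hxz by auto; lra | lra].
Qed.

Lemma pow_sub1_pos k c : (1 <= k)%nat -> 0 < c -> 0 < (1 + c) ^ k - 1.
Proof. intros. pose proof (Rlt_pow_R1 (1 + c) k ltac:(lra) ltac:(lia)). lra. Qed.

(* [x * G n (1 / x)] is the minimum of [trial n x] over [c > 0], attained at the [g] with
   [xpar n g = x]. *)
Definition trial (n : nat) (x c : R) : R :=
  INR n * c / ((1 + c) ^ n - 1) * Rpower (1 + x * ((1 + c) ^ n - 1)) (1 - 1 / INR n).

Section Variational.

Variable m : nat.
Hypothesis Hm : (1 <= m)%nat.
Variable x : R.
Hypothesis Hx : 0 < x.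

Let n := S m.
Let p := 1 - 1 / INR n.

Let pow_n_sub1_pos c : 0 < c -> 0 < (1 + c) ^ n - 1.
Proof. apply pow_sub1_pos. unfold n; lia. Qed.

Let pow_m_sub1_pos c : 0 < c -> 0 < (1 + c) ^ m - 1.
Proof. apply pow_sub1_pos, Hm. Qed.

Let log_trial (c : R) : R :=
  ln c - ln ((1 + c) ^ n - 1) + p * ln (1 + x * ((1 + c) ^ n - 1)).

Let log_trial_derive (c : R) : R :=
  / c - INR n * (1 + c) ^ m / ((1 + c) ^ n - 1)
  + p * (x * (INR n * (1 + c) ^ m)) / (1 + x * ((1 + c) ^ n - 1)).

Let log_trial_is_derive c : 0 < c -> is_derive log_trial c (log_trial_derive c).
Proof.
  intros Hc. pose proof (pow_n_sub1_pos c Hc) as Hq. unfold log_trial, log_trial_derive.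
  unfold n in *. change ((1 + c) ^ S m) with ((1 + c) * (1 + c) ^ m) in *.
  assert (0 < x * ((1 + c) * (1 + c) ^ m + - (1))) by (apply Rmult_lt_0_compat; lra).
  auto_derive.
  - repeat split; lra.
  - change (match m with 0%nat => 1 | S _ => INR m + 1 end) with (INR (S m)).
    field. repeat split; lra.
Qed.

(* The sign of the derivative is that of [x - xparam m (1 + c)]. *)
Let log_trial_derive_eq c : 0 < c ->
  log_trial_derive c * (c * ((1 + c) ^ n - 1) * (1 + x * ((1 + c) ^ n - 1)))
  = ((1 + c) ^ n - 1) * ((1 + c) ^ m - 1) * (x - xparam m (1 + c)).
Proof.
  intros Hc. pose proof (pow_n_sub1_pos c Hc). pose proof (pow_m_sub1_pos c Hc).
  assert (0 < x * ((1 + c) ^ n - 1)) by (apply Rmult_lt_0_compat; lra).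
  rewrite <- xpar_eq_xparam by auto. unfold xpar, log_trial_derive, p, n in *.
  replace (S m - 1)%nat with m by lia. rewrite S_INR in *.
  change ((1 + c) ^ S m) with ((1 + c) * (1 + c) ^ m) in *.
  assert (0 < INR m) by (apply lt_0_INR; lia).
  field. repeat split; lra.
Qed.

Let log_trial_derive_sign g c : 0 < g -> xparam m (1 + g) = x -> 0 < c ->
  (g <= c -> 0 <= log_trial_derive c) /\ (c <= g -> log_trial_derive c <= 0).
Proof.
  intros Hg Hxg Hc. pose proof (log_trial_derive_eq c Hc) as Heq.
  pose proof (pow_n_sub1_pos c Hc). pose proof (pow_m_sub1_pos c Hc).
  assert (Hden : 0 < c * ((1 + c) ^ n - 1) * (1 + x * ((1 + c) ^ n - 1))).
  { assert (0 < x * ((1 + c) ^ n - 1)) by (apply Rmult_lt_0_compat; lra).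
    repeat apply Rmult_lt_0_compat; lra. }
  assert (Hk : 0 < ((1 + c) ^ n - 1) * ((1 + c) ^ m - 1)) by (apply Rmult_lt_0_compat; lra).
  split; intros Hgc; apply Rmult_le_reg_r with (1 := Hden); rewrite Heq, Rmult_0_l.
  - assert (xparam m (1 + c) <= xparam m (1 + g)) by (apply xparam_decr; auto; lra). nra.
  - assert (xparam m (1 + g) <= xparam m (1 + c)) by (apply xparam_decr; auto; lra). nra.
Qed.

Let log_trial_min g c : 0 < g -> xparam m (1 + g) = x -> 0 < c -> log_trial g <= log_trial c.
Proof.
  intros Hg Hxg Hc.
  assert (Hbetween : forall z, Rmin g c <= z <= Rmax g c -> 0 < z)
    by (intros z [Hz _]; unfold Rmin in Hz; destruct (Rle_dec g c); lra).
  destruct (MVT_gen log_trial g c log_trial_derive) as [z [Hz Hmvt]].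
  - intros y [Hy1 Hy2]. apply log_trial_is_derive, Hbetween. lra.
  - intros y Hy. apply derivable_continuous_pt. exists (log_trial_derive y).
    apply is_derive_Reals, log_trial_is_derive, Hbetween; auto.
  - assert (Hz0 : 0 < z) by (apply Hbetween; lra).
    destruct (log_trial_derive_sign g z Hg Hxg Hz0) as [Hup Hdown].
    unfold Rmin, Rmax in Hz. destruct (Rle_dec g c).
    + specialize (Hup ltac:(lra)). nra.
    + specialize (Hdown ltac:(lra)). nra.
Qed.

Let trial_eq_exp c : 0 < c -> trial n x c = INR n * exp (log_trial c).
Proof.
  intros Hc. pose proof (pow_n_sub1_pos c Hc). unfold trial, log_trial.
  fold p. set (q := (1 + c) ^ n - 1) in *.
  replace (ln c - ln q + p * ln (1 + x * q)) with (ln c + - ln q + p * ln (1 + x * q)) by ring.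
  rewrite !exp_plus, exp_Ropp, !exp_ln by (try apply Rmult_lt_0_compat; lra).
  unfold Rpower. field. lra.
Qed.

Lemma trial_min g c : 0 < g -> xparam m (1 + g) = x -> 0 < c -> trial n x g <= trial n x c.
Proof.
  intros. rewrite !trial_eq_exp by auto. apply Rmult_le_compat_l; [apply pos_INR|].
  destruct (log_trial_min g c) as [Hlt|Heq]; auto.
  - left; apply exp_increasing; auto.
  - rewrite Heq; lra.
Qed.

End Variational.

Lemma trial_le n x c : (1 <= n)%nat -> 0 < x -> 0 < c -> trial n x c <= 1 + INR n * c * x.
Proof.
  intros Hn Hx Hc. unfold trial. set (q := (1 + c) ^ n - 1).
  assert (Hq : INR n * c <= q) by (unfold q; pose proof (Rle_pow_lin c n ltac:(lra)); lra).
  assert (0 < INR n) by (apply lt_0_INR; lia).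
  assert (0 < q) by nra.
  assert (Hp : Rpower (1 + x * q) (1 - 1 / INR n) <= 1 + x * q).
  { rewrite <- (Rpower_1 (1 + x * q)) at 2 by nra. apply Rle_Rpower; [nra|].
    assert (0 < 1 / INR n) by (apply Rdiv_lt_0_compat; lra). lra. }
  assert (Hcq : INR n * c / q <= 1)
    by (apply (Rmult_le_reg_r q); auto; unfold Rdiv; rewrite Rmult_assoc, Rinv_l; lra).
  assert (INR n * c / q * Rpower (1 + x * q) (1 - 1 / INR n) <= INR n * c / q * (1 + x * q))
    by (apply Rmult_le_compat_l; [apply Rdiv_le_0_compat|]; nra).
  replace (INR n * c / q * (1 + x * q)) with (INR n * c / q + INR n * c * x) in H1 by (field; lra).
  lra.
Qed.

Lemma trial_at_nroot_sub1 n x : (1 <= n)%nat -> 0 < x ->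
  trial n x (nroot n (1 + 1 / x) - 1)
  = INR n * x * (nroot n (1 + 1 / x) - 1) * Rpower 2 (1 - 1 / INR n).
Proof.
  intros Hn Hx. unfold trial. replace (1 + (nroot n (1 + 1 / x) - 1)) with (nroot n (1 + 1 / x)) by ring.
  assert (0 < 1 / x) by (apply Rdiv_lt_0_compat; lra).
  rewrite nroot_pow by (auto; lra).
  replace (1 + x * (1 + 1 / x - 1)) with 2 by (field; lra). field. lra.
Qed.

Lemma ln2_pos : 0 < ln 2.
Proof. rewrite <- ln_1. apply ln_increasing; lra. Qed.

Lemma ln_4 : ln 4 = 2 * ln 2.
Proof. replace 4 with (2 * 2) by ring. rewrite ln_mult; lra. Qed.

(* [2 ^ y <= 2 y] for [1 <= y <= 2], by convexity. *)
Lemma le_two_mul_log2 s : 2 <= s <= 4 -> s <= 2 * (ln s / ln 2).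
Proof.
  intros Hs. pose proof ln2_pos.
  assert (ln 2 <= ln s) by (apply ln_le; lra).
  assert (ln s <= 2 * ln 2) by (rewrite <- ln_4; apply ln_le; lra).
  set (th := ln s / ln 2 - 1).
  assert (Hth : 0 <= th <= 1).
  { unfold th. split; apply (Rmult_le_reg_r (ln 2)); auto; field_simplify; lra. }
  assert (Hs2 : s / 2 = exp ((1 - th) * 0 + th * ln 2)).
  { replace ((1 - th) * 0 + th * ln 2) with (ln s + - ln 2) by (unfold th; field; lra).
    rewrite exp_plus, exp_Ropp, !exp_ln by lra. field. }
  pose proof (exp_convex th 0 (ln 2) Hth) as Hconv.
  rewrite <- Hs2, exp_0, exp_ln in Hconv by lra. unfold th in Hconv. lra.
Qed.

Lemma gsum_ge_tangent k y c : 0 < y ->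
  exp c * (INR k + ln y * (INR k * (INR k - 1) / 2) - INR k * c) <= gsum k y.
Proof.
  intros Hy. induction k as [|k IH]; [simpl; lra|]. rewrite gsum_S, S_INR.
  assert (Htan : exp c * (1 + (INR k * ln y - c)) <= y ^ k).
  { replace (y ^ k) with (exp c * exp (INR k * ln y - c)).
    - pose proof (exp_ineq1_le (INR k * ln y - c)). pose proof (exp_pos c). nra.
    - rewrite <- exp_plus.
      replace (c + (INR k * ln y - c)) with (ln (y ^ k)) by (rewrite ln_pow by lra; ring).
      apply exp_ln, pow_lt; lra. }
  replace (exp c * (INR k + 1 + ln y * ((INR k + 1) * (INR k + 1 - 1) / 2) - (INR k + 1) * c))
    with (exp c * (INR k + ln y * (INR k * (INR k - 1) / 2) - INR k * c)
          + exp c * (1 + (INR k * ln y - c))) by field.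
  lra.
Qed.

Lemma gsum_S_ge_amgm m y : 0 < y -> INR (S m) * exp (INR m / 2 * ln y) <= gsum (S m) y.
Proof.
  intros Hy. eapply Rle_trans; [|apply (gsum_ge_tangent (S m) y (INR m / 2 * ln y) Hy)].
  rewrite S_INR. right. field.
Qed.

Section LogUpperBound.

Variable m : nat.
Hypothesis Hm : (1 <= m)%nat.

Let n := S m.
Let p := 1 - 1 / INR n.

Let INR_n_pos : 0 < INR n := INR_S_pos m.

Lemma mul_nroot_5_sub1_le : INR n * Rpower 2 p * (nroot n 5 - 1) <= 4.
Proof.
  set (y := nroot n 5). pose proof INR_n_pos.
  assert (Hy : y ^ n = 5) by (apply nroot_pow; unfold n; lia || lra).
  assert (Hy1 : 1 < y) by (apply nroot_gt1; unfold n; lia || lra).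
  assert (Hlny : ln y = ln 5 / INR n) by (unfold y; rewrite nroot_exp, ln_exp; lra).
  assert (H2p : Rpower 2 p <= exp (INR m / 2 * ln y)).
  { unfold Rpower. left. apply exp_increasing. rewrite Hlny. unfold p, n. rewrite S_INR in *.
    assert (2 * ln 2 < ln 5) by (rewrite <- ln_4; apply ln_increasing; lra).
    assert (0 < INR m) by (apply lt_0_INR; lia).
    replace ((1 - 1 / (INR m + 1)) * ln 2) with (INR m / (INR m + 1) * ln 2) by (field; lra).
    replace (INR m / 2 * (ln 5 / (INR m + 1))) with (INR m / (INR m + 1) * (ln 5 / 2)) by (field; lra).
    apply Rmult_lt_compat_l; [apply Rdiv_lt_0_compat|]; lra. }
  assert (Hgsum : INR n * Rpower 2 p <= gsum n y).
  { eapply Rle_trans; [|apply gsum_S_ge_amgm; unfold y; apply nroot_pos].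
    apply Rmult_le_compat_l; [apply pos_INR | exact H2p]. }
  pose proof (gsum_geom n y) as Hgeom. rewrite Hy in Hgeom.
  assert ((y - 1) * (INR n * Rpower 2 p) <= (y - 1) * gsum n y) by (apply Rmult_le_compat_l; lra).
  lra.
Qed.

Lemma mul_two_nroot_sub1_le : Rpower 2 p * (2 * nroot n (5 / 4) - 1) <= 2.
Proof.
  pose proof INR_n_pos.
  assert (H54 : nroot n (5 / 4) <= 1 + 1 / (4 * INR n)).
  { apply nroot_le_of_pow; [unfold n; lia | lra | |].
    - assert (0 < 1 / (4 * INR n)) by (apply Rdiv_lt_0_compat; lra). lra.
    - eapply Rle_trans; [|apply Rle_pow_lin; left; apply Rdiv_lt_0_compat; lra].
      right. field. lra. }
  assert (H2 : 1 + ln 2 / INR n <= nroot n 2) by (rewrite nroot_exp by lra; apply exp_ineq1_le).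
  assert (1 / (2 * INR n) <= ln 2 / INR n).
  { pose proof ln_lt_2. replace (1 / (2 * INR n)) with ((1 / 2) / INR n) by (field; lra).
    unfold Rdiv at 1 3. apply Rmult_le_compat_r; [left; apply Rinv_0_lt_compat|]; lra. }
  assert (Hle : 2 * nroot n (5 / 4) - 1 <= nroot n 2).
  { replace (1 / (4 * INR n)) with (1 / (2 * INR n) / 2) in H54 by (field; lra). lra. }
  unfold p. rewrite Rpower_conj_nroot by lra. pose proof (nroot_pos n 2).
  apply (Rmult_le_reg_r (nroot n 2)); auto.
  replace (2 / nroot n 2 * (2 * nroot n (5 / 4) - 1) * nroot n 2)
    with (2 * (2 * nroot n (5 / 4) - 1)) by (field; lra).
  lra.
Qed.

(* Convexity in [ln s] between [s = 4] and [s = 2 ^ n], whose values are bounded above. *)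
Lemma nroot_S_sub1_le_interp s : 4 <= s <= 2 ^ n -> (3 <= n)%nat ->
  let l := (ln s / ln 2 - 2) / (INR n - 2) in
  0 <= l <= 1 /\
  nroot n (1 + s) - 1 <= (1 - l) * (nroot n 5 - 1) + l * (2 * nroot n (5 / 4) - 1).
Proof.
  intros Hs Hn3 l. pose proof ln2_pos. pose proof INR_n_pos.
  assert (Hn3R : 3 <= INR n) by (replace 3 with (INR 3) by (simpl; lra); apply le_INR; auto).
  assert (Hl1 : 2 * ln 2 <= ln s) by (rewrite <- ln_4; apply ln_le; lra).
  assert (Hl2 : ln s <= INR n * ln 2) by (rewrite <- ln_pow by lra; apply ln_le; lra).
  assert (Hl : 0 <= l <= 1).
  { unfold l. split; [apply Rdiv_le_0_compat|apply (Rmult_le_reg_r (INR n - 2)); [lra|]].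
    - apply (Rmult_le_reg_r (ln 2)); auto. field_simplify; lra.
    - lra.
    - unfold Rdiv. rewrite Rmult_assoc, Rinv_l, Rmult_1_r by lra.
      apply (Rmult_le_reg_r (ln 2)); auto. field_simplify; lra. }
  split; auto.
  assert (Hs_interp : nroot n s = exp ((1 - l) * (2 * ln 2 / INR n) + l * ln 2)).
  { rewrite nroot_exp by lra. f_equal. unfold l. field. lra. }
  pose proof (exp_convex l (2 * ln 2 / INR n) (ln 2) Hl) as Hconv.
  rewrite <- Hs_interp, exp_ln in Hconv by lra.
  replace (exp (2 * ln 2 / INR n)) with (nroot n 4) in Hconv by (rewrite nroot_exp, ln_4 by lra; auto).
  assert (H1s : nroot n (1 + s) <= nroot n (5 / 4) * nroot n s)
    by (rewrite <- nroot_mult by lra; apply nroot_incr; [unfold n; lia | lra | lra]).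
  assert (H5 : nroot n (5 / 4) * nroot n 4 = nroot n 5) by (rewrite <- nroot_mult by lra; f_equal; lra).
  pose proof (nroot_pos n (5 / 4)).
  assert (nroot n (5 / 4) * nroot n s <= nroot n (5 / 4) * ((1 - l) * nroot n 4 + l * 2))
    by (apply Rmult_le_compat_l; lra).
  nra.
Qed.

Lemma mul_nroot_S_sub1_le_log2 s : 4 <= s < 2 ^ n ->
  INR n * (nroot n (1 + s) - 1) * Rpower 2 p <= 2 * (ln s / ln 2).
Proof.
  intros Hs. pose proof ln2_pos. pose proof INR_n_pos.
  assert (Hn3 : (3 <= n)%nat).
  { destruct (Compare_dec.le_lt_dec 3 n); auto.
    assert (n = 2%nat) by (unfold n in *; lia). rewrite H1 in Hs. simpl in Hs. lra. }
  destruct (nroot_S_sub1_le_interp s ltac:(lra) Hn3) as [Hl Hinterp].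
  set (l := (ln s / ln 2 - 2) / (INR n - 2)) in *.
  pose proof mul_nroot_5_sub1_le. pose proof mul_two_nroot_sub1_le.
  assert (H2p : 0 < Rpower 2 p) by apply exp_pos.
  assert (Hscaled : INR n * Rpower 2 p * (nroot n (1 + s) - 1) <=
    (1 - l) * (INR n * Rpower 2 p * (nroot n 5 - 1))
    + l * INR n * (Rpower 2 p * (2 * nroot n (5 / 4) - 1))).
  { assert (0 <= INR n * Rpower 2 p) by nra.
    pose proof (Rmult_le_compat_l _ _ _ H3 Hinterp). nra. }
  assert ((1 - l) * (INR n * Rpower 2 p * (nroot n 5 - 1)) <= (1 - l) * 4)
    by (apply Rmult_le_compat_l; lra).
  assert (l * INR n * (Rpower 2 p * (2 * nroot n (5 / 4) - 1)) <= l * INR n * 2)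
    by (apply Rmult_le_compat_l; nra).
  assert (Hn2 : 2 < INR n) by (replace 2 with (INR 2) by (simpl; lra); apply lt_INR; lia).
  assert ((1 - l) * 4 + l * INR n * 2 = 2 * (ln s / ln 2)) by (unfold l; field; lra).
  lra.
Qed.

End LogUpperBound.

Definition Gpar (m : nat) (g : R) : R := 1 / xparam m (1 + g) * xGpar (S m) g.

Lemma pow_half_eq n : (1 / 2) ^ n = 1 / 2 ^ n.
Proof. unfold Rdiv. rewrite Rpow_mult_distr, pow1, pow_inv. ring. Qed.

Section Parametrization.

Variable m : nat.
Hypothesis Hm : (1 <= m)%nat.
Variable g : R.
Hypothesis Hg : 0 < g.

Let n := S m.
Let p := 1 - 1 / INR n.
Let a := 1 + g.
Let x := xparam m a.
Let S0 := gsum m a.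
Let S1 := gsum (S m) a.
Let w := wsum m a / S0.
Let u := INR m * a ^ m / S0.
Let U := Rpower u p.

Let INR_n_pos : 0 < INR n := INR_S_pos m.

Let S0_pos : 0 < S0.
Proof. apply gsum_pos; auto. unfold a; lra. Qed.

Let S1_pos : 0 < S1.
Proof. apply gsum_pos; [unfold a; lra | lia]. Qed.

Let w_ge1 : 1 <= w.
Proof.
  pose proof S0_pos. assert (S0 <= wsum m a) by (apply gsum_le_wsum; unfold a; lra).
  unfold w. apply (Rmult_le_reg_r S0); auto. unfold Rdiv. rewrite Rmult_assoc, Rinv_l; lra.
Qed.

Let g_mul_S1 : g * S1 = a ^ n - 1.
Proof. unfold S1, n. rewrite <- gsum_geom. unfold a. ring. Qed.

Let x_eq : x = w / S1.
Proof.
  pose proof S0_pos. pose proof S1_pos. unfold x, xparam, w. fold S0 S1. field. lra.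
Qed.

Let x_pos : 0 < x.
Proof. rewrite x_eq. pose proof w_ge1. pose proof S1_pos. apply Rdiv_lt_0_compat; lra. Qed.

Let u_sub1 : u - 1 = g * w.
Proof.
  pose proof S0_pos. pose proof (wsum_geom m a) as Hw. replace (a - 1) with g in Hw by (unfold a; ring).
  unfold u, w. fold S0 in Hw |- *. apply (Rmult_eq_reg_r S0); [|lra].
  replace ((INR m * a ^ m / S0 - 1) * S0) with (INR m * a ^ m - S0) by (field; lra).
  replace (g * (wsum m a / S0) * S0) with (g * wsum m a) by (field; lra). lra.
Qed.

Let u_gt1 : 1 < u.
Proof. pose proof u_sub1. pose proof w_ge1. nra. Qed.

Let xGpar_eq : xGpar n g = INR n / S1 * U.
Proof.
  pose proof S0_pos. pose proof S1_pos.
  unfold xGpar, U, n. replace (S m - 1)%nat with m by lia.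
  assert (E1 : (1 + g) ^ S m - 1 = g * S1) by (rewrite g_mul_S1; auto).
  assert (E0 : (1 + g) ^ m - 1 = g * S0) by (unfold S0, a; rewrite <- gsum_geom; ring).
  rewrite E1, E0.
  replace ((1 + g) ^ m * g * INR m / (g * S0)) with u by (unfold u, a; field; lra).
  unfold p, n. field. lra.
Qed.

Let Gpar_eq : Gpar m g = INR n * U / w.
Proof.
  unfold Gpar. fold a x n. rewrite xGpar_eq, x_eq. pose proof S1_pos. pose proof w_ge1. field. lra.
Qed.

Let Gpar_mul_nroot_pow : (Gpar m g * nroot n x / INR n) ^ n = u ^ m / (S1 * w ^ m).
Proof.
  pose proof w_ge1. pose proof S1_pos. pose proof u_gt1. pose proof INR_n_pos.
  rewrite Gpar_eq. replace (INR n * U / w * nroot n x / INR n) with (U * nroot n x / w) by (field; lra).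
  unfold Rdiv. rewrite !Rpow_mult_distr, pow_inv. unfold U, p, n.
  rewrite Rpower_conj_pow, nroot_pow by (lia || lra || apply x_pos).
  rewrite x_eq. simpl pow. assert (w ^ m <> 0) by (apply pow_nonzero; lra).
  field. repeat split; lra.
Qed.

Lemma Gpar_ratio_bounds : g / a <= Gpar m g * nroot n x / INR n <= 1.
Proof.
  pose proof w_ge1. pose proof S1_pos. pose proof u_gt1. pose proof INR_n_pos. pose proof S0_pos.
  assert (Ha : 1 < a) by (unfold a; lra).
  assert (Hr : 0 <= Gpar m g * nroot n x / INR n).
  { rewrite Gpar_eq. pose proof (nroot_pos n x). assert (0 < U) by apply exp_pos.
    apply Rdiv_le_0_compat; [|lra]. apply Rmult_le_pos; [apply Rdiv_le_0_compat|]; nra. }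
  assert (Hn1 : (1 <= n)%nat) by (unfold n; lia).
  pose proof (pow_lt w m ltac:(lra)). pose proof (pow_lt a n ltac:(lra)).
  split; apply (pow_le_reg _ _ n); auto; try lra;
    [apply Rdiv_le_0_compat; lra | rewrite Gpar_mul_nroot_pow..].
  - assert (HgS1 : g * S1 <= a ^ n) by (rewrite g_mul_S1; lra).
    assert (Hgw : (g * w) ^ m <= u ^ m) by (apply pow_incr; pose proof u_sub1; nra).
    rewrite Rpow_mult_distr in Hgw. pose proof (pow_lt g m Hg).
    unfold Rdiv at 1. rewrite Rpow_mult_distr, pow_inv.
    apply (Rmult_le_reg_r (a ^ n * (S1 * w ^ m))); [apply Rmult_lt_0_compat; nra|].
    replace (g ^ n) with (g * g ^ m) by reflexivity.
    replace (g * g ^ m * / a ^ n * (a ^ n * (S1 * w ^ m))) with (g * S1 * (g ^ m * w ^ m))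
      by (field; lra).
    replace (u ^ m / (S1 * w ^ m) * (a ^ n * (S1 * w ^ m))) with (a ^ n * u ^ m) by (field; nra).
    apply Rmult_le_compat; nra.
  - rewrite pow1. apply (Rmult_le_reg_r (S1 * w ^ m)); [nra|].
    replace (u ^ m / (S1 * w ^ m) * (S1 * w ^ m)) with (u ^ m) by (field; nra).
    assert (Hu : u <= a * w).
    { unfold u, w. unfold Rdiv. rewrite <- Rmult_assoc.
      apply Rmult_le_compat_r; [left; apply Rinv_0_lt_compat; lra|].
      apply pow_le_mul_wsum; lra. }
    assert (u ^ m <= a ^ m * w ^ m) by (rewrite <- Rpow_mult_distr; apply pow_incr; lra).
    assert (a ^ m <= S1) by (apply pow_le_gsum_S; lra).
    nra.
Qed.

Let x_ge_inv_S1 : 1 / S1 <= x.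
Proof.
  rewrite x_eq. pose proof w_ge1. pose proof S1_pos.
  unfold Rdiv. apply Rmult_le_compat_r; [left; apply Rinv_0_lt_compat|]; lra.
Qed.

Lemma xparam_ge_inv_pow : 1 / (INR n * a ^ n) <= x.
Proof.
  eapply Rle_trans; [|apply x_ge_inv_S1]. pose proof S1_pos.
  assert (S1 <= INR n * a ^ n) by (apply gsum_le_pow; unfold a; lra).
  unfold Rdiv. rewrite !Rmult_1_l. apply Rinv_le_contravar; lra.
Qed.

Lemma two_le_of_xparam_le : x <= (1 / 2) ^ n -> 2 <= a.
Proof.
  intros Hx2. destruct (Rle_lt_dec 2 a) as [|Ha2]; auto. exfalso.
  assert (HS1 : S1 <= gsum n 2) by (apply gsum_incr; unfold a in *; lra).
  pose proof (gsum_geom n 2) as Hgeom. replace (2 - 1) with 1 in Hgeom by ring.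
  rewrite Rmult_1_l in Hgeom.
  pose proof x_ge_inv_S1. pose proof S1_pos. rewrite pow_half_eq in Hx2.
  assert (1 / 2 ^ n < 1 / S1).
  { unfold Rdiv. rewrite !Rmult_1_l. apply Rinv_lt_contravar; [apply Rmult_lt_0_compat|]; lra. }
  lra.
Qed.

Lemma Gpar_ge_two_add_ln : x < 1 / 2 -> 2 + ln (1 / (2 * x)) <= Gpar m g.
Proof.
  intros Hx2. pose proof u_gt1. pose proof w_ge1. pose proof S1_pos. pose proof x_pos.
  assert (Hpow : a ^ n = 1 + (u - 1) * (1 / x)).
  { rewrite u_sub1, x_eq. replace (a ^ n) with (1 + g * S1) by (rewrite g_mul_S1; ring).
    field. lra. }
  pose proof (two_add_ln_le m (u - 1) ltac:(lra) a (1 / x)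
    ltac:(apply (Rmult_lt_reg_r x); [lra|]; field_simplify; lra) ltac:(unfold a; lra) Hpow) as Hlog.
  replace (1 / x / 2) with (1 / (2 * x)) in Hlog by (field; lra).
  replace (1 + (u - 1)) with u in Hlog by ring. fold n p U in Hlog.
  rewrite Gpar_eq. replace (INR n * U / w) with (INR n * (a - 1) * U / (u - 1)); auto.
  rewrite u_sub1. replace (a - 1) with g by (unfold a; ring). field. lra.
Qed.

Let Gpar_eq_trial : Gpar m g = 1 / x * trial n x g.
Proof.
  unfold Gpar. fold a x n. f_equal. rewrite xGpar_eq. unfold trial.
  replace ((1 + g) ^ n - 1) with (g * S1) by (rewrite g_mul_S1; auto).
  replace (1 + x * (g * S1)) with u by (rewrite x_eq; pose proof u_sub1; pose proof S1_pos; field_simplify; lra).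
  fold p U. pose proof S1_pos. field. lra.
Qed.

Let Gpar_le_trial c : 0 < c -> Gpar m g <= 1 / x * trial n x c.
Proof.
  intros Hc. rewrite Gpar_eq_trial. pose proof x_pos.
  apply Rmult_le_compat_l; [left; apply Rdiv_lt_0_compat; lra|].
  apply trial_min; auto.
Qed.

(* The limit [c -> 0] in [Gpar_le_trial]. *)
Let Gpar_le_inv : Gpar m g <= 1 / x.
Proof.
  pose proof x_pos. pose proof INR_n_pos. apply Rle_plus_epsilon. intros eps Heps.
  eapply Rle_trans; [apply (Gpar_le_trial (eps / INR n)), Rdiv_lt_0_compat; lra|].
  pose proof (trial_le (S m) x (eps / INR n) ltac:(lia) H ltac:(apply Rdiv_lt_0_compat; lra)).
  fold n in H1.
  apply Rle_trans with (1 / x * (1 + INR n * (eps / INR n) * x)).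
  - apply Rmult_le_compat_l; [left; apply Rdiv_lt_0_compat|]; lra.
  - right. field. lra.
Qed.

Lemma Gpar_le_two_log2 : x < 1 / 2 -> (1 / 2) ^ n < x -> Gpar m g <= 2 * (ln (1 / x) / ln 2).
Proof.
  intros Hx2 Hxn. pose proof x_pos.
  assert (Hs2 : 2 <= 1 / x) by (apply (Rmult_le_reg_r x); [lra|]; field_simplify; lra).
  destruct (Rle_lt_dec 4 (1 / x)) as [Hs4|Hs4].
  - assert (Hsn : 1 / x < 2 ^ n).
    { rewrite pow_half_eq in Hxn. pose proof (pow_lt 2 n ltac:(lra)).
      apply (Rmult_lt_reg_r (x / 2 ^ n)); [apply Rdiv_lt_0_compat; lra|].
      field_simplify; lra. }
    assert (Hc : 0 < nroot n (1 + 1 / x) - 1)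
      by (apply Rlt_0_minus, nroot_gt1; [unfold n; lia | lra]).
    eapply Rle_trans; [apply (Gpar_le_trial _ Hc)|].
    rewrite trial_at_nroot_sub1 by (unfold n; lia || lra). fold p.
    replace (1 / x * (INR n * x * (nroot n (1 + 1 / x) - 1) * Rpower 2 p))
      with (INR n * (nroot n (1 + 1 / x) - 1) * Rpower 2 p) by (field; lra).
    apply mul_nroot_S_sub1_le_log2; auto.
  - pose proof Gpar_le_inv. pose proof (le_two_mul_log2 (1 / x) ltac:(lra)). lra.
Qed.

End Parametrization.

Lemma G_S_eq_Gpar m x : (1 <= m)%nat -> 0 < x < 1 / 2 ->
  exists g, 0 < g /\ xparam m (1 + g) = x /\ G (S m) (1 / x) = Gpar m g.
Proof.
  intros Hm Hx. unfold G. replace (Nat.eqb (S m) 1) with false by (destruct m; [lia | reflexivity]).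
  destruct (Req_EM_T (1 / x) 2) as [Hx2|_].
  { exfalso. assert (x * (1 / x) = 1) by (field; lra). rewrite Hx2 in H. lra. }
  set (P := fun g => 0 < g /\ xpar (S m) g = / (1 / x)).
  assert (HP : exists g, P g).
  { destruct (xparam_surjective m x Hm Hx) as [g [Hg Hxg]]. exists g. split; auto.
    rewrite xpar_eq_xparam, Hxg by auto. field. lra. }
  destruct (epsilon_spec (inhabits 1) P HP) as [Hg Hxg].
  assert (Hx' : xparam m (1 + epsilon (inhabits 1) P) = x)
    by (rewrite <- xpar_eq_xparam, Hxg by auto; field; lra).
  exists (epsilon (inhabits 1) P). unfold Gpar. rewrite Hx'. auto.
Qed.

Lemma G_S_2 m : (1 <= m)%nat -> G (S m) 2 = 2.
Proof.
  intros Hm. unfold G. replace (Nat.eqb (S m) 1) with false by (destruct m; [lia | reflexivity]).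
  destruct (Req_EM_T 2 2); [reflexivity | lra].
Qed.

Lemma pow_half_S_le m : (1 <= m)%nat -> (1 / 2) ^ S m <= 1 / 4.
Proof.
  intros Hm. rewrite pow_half_eq. simpl pow.
  assert (2 <= 2 ^ m) by (destruct m; [lia|]; pose proof (pow_R1_Rle 2 m ltac:(lra)); simpl; lra).
  unfold Rdiv. rewrite !Rmult_1_l. apply Rinv_le_contravar; lra.
Qed.

Section GBounds.

Variable m : nat.
Hypothesis Hm : (1 <= m)%nat.

Let n := S m.
Let INR_n_pos : 0 < INR n := INR_S_pos m.

Lemma G_mul_nroot_bounds x : 0 < x < 1 / 2 ->
  exists g, 0 < g /\ 1 / (INR n * (1 + g) ^ n) <= x /\
            g / (1 + g) <= G n (1 / x) * nroot n x / INR n <= 1 /\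
            (x <= (1 / 2) ^ n -> 1 / 2 <= G n (1 / x) * nroot n x / INR n).
Proof.
  intros Hx. unfold n. destruct (G_S_eq_Gpar m x Hm Hx) as [g [Hg [Hxg ->]]].
  pose proof (Gpar_ratio_bounds m Hm g Hg) as Hratio. pose proof (xparam_ge_inv_pow m Hm g Hg).
  rewrite Hxg in *. exists g. repeat split; try tauto.
  intros Hxn. eapply Rle_trans; [|apply Hratio].
  pose proof (two_le_of_xparam_le m Hm g Hg ltac:(rewrite Hxg; exact Hxn)).
  apply (Rmult_le_reg_r (1 + g)); [lra|]. field_simplify; lra.
Qed.

Lemma G_le_div_nroot x : 0 < x < 1 / 2 -> G n (1 / x) <= INR n / nroot n x.
Proof.
  intros Hx. destruct (G_mul_nroot_bounds x Hx) as [g [_ [_ [[_ Hle] _]]]].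
  pose proof (nroot_pos n x). pose proof INR_n_pos.
  apply (Rmult_le_reg_r (nroot n x / INR n)); [apply Rdiv_lt_0_compat; lra|].
  replace (INR n / nroot n x * (nroot n x / INR n)) with 1 by (field; lra).
  unfold Rdiv in *. rewrite <- Rmult_assoc. exact Hle.
Qed.

Lemma G_ge_half_div_nroot x : 0 < x <= (1 / 2) ^ n -> 1 / 2 * (INR n / nroot n x) <= G n (1 / x).
Proof.
  intros Hx. pose proof (pow_half_S_le m Hm). fold n in H.
  destruct (G_mul_nroot_bounds x ltac:(lra)) as [g [_ [_ [_ Hge]]]].
  specialize (Hge ltac:(lra)).
  pose proof (nroot_pos n x). pose proof INR_n_pos.
  apply (Rmult_le_reg_r (nroot n x / INR n)); [apply Rdiv_lt_0_compat; lra|].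
  replace (1 / 2 * (INR n / nroot n x) * (nroot n x / INR n)) with (1 / 2) by (field; lra).
  unfold Rdiv in *. rewrite <- Rmult_assoc. exact Hge.
Qed.

Lemma G_le_two_log2 x : 0 < x <= 1 / 2 -> (1 / 2) ^ n < x -> G n (1 / x) <= 2 * (ln (1 / x) / ln 2).
Proof.
  intros Hx Hxn. unfold n. destruct (Req_dec x (1 / 2)) as [->|Hx2].
  - replace (1 / (1 / 2)) with 2 by field. rewrite G_S_2 by auto.
    pose proof ln2_pos. right. field. lra.
  - destruct (G_S_eq_Gpar m x Hm ltac:(lra)) as [g [Hg [Hxg ->]]].
    rewrite <- Hxg in *. apply Gpar_le_two_log2; auto; lra.
Qed.

Lemma G_ge_two_add_ln x : 0 < x <= 1 / 2 -> 2 + ln (1 / (2 * x)) <= G n (1 / x).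
Proof.
  intros Hx. unfold n. destruct (Req_dec x (1 / 2)) as [->|Hx2].
  - replace (1 / (1 / 2)) with 2 by field. rewrite G_S_2 by auto.
    replace (1 / (2 * (1 / 2))) with 1 by field. rewrite ln_1. lra.
  - destruct (G_S_eq_Gpar m x Hm ltac:(lra)) as [g [Hg [Hxg ->]]].
    rewrite <- Hxg in *. apply Gpar_ge_two_add_ln; auto; lra.
Qed.

(* The lower bound [g / (1 + g)] tends to [1] because [x >= 1 / (n (1 + g) ^ n)] forces
   [g] to infinity as [x] tends to [0]. *)
Lemma G_ratio_near_1 eps : 0 < eps -> exists delta, 0 < delta /\
  forall x, 0 < x < delta -> 1 - eps < G n (1 / x) / (INR n / nroot n x) <= 1.
Proof.
  intros Heps. set (A := 1 / eps + 1).
  assert (HA : 1 < A) by (unfold A; assert (0 < 1 / eps) by (apply Rdiv_lt_0_compat; lra); lra).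
  pose proof INR_n_pos.
  assert (HAn : 0 < INR n * A ^ n) by (apply Rmult_lt_0_compat; [lra | apply pow_lt; lra]).
  exists (Rmin (1 / 2) (1 / (INR n * A ^ n))). split; [apply Rmin_pos; [lra | apply Rdiv_lt_0_compat; lra]|].
  intros x [Hx0 Hx]. pose proof (Rmin_l (1 / 2) (1 / (INR n * A ^ n))). pose proof (Rmin_r (1 / 2) (1 / (INR n * A ^ n))).
  destruct (G_mul_nroot_bounds x ltac:(lra)) as [g [Hg [Hxg [[Hlo Hup] _]]]].
  pose proof (nroot_pos n x).
  replace (G n (1 / x) / (INR n / nroot n x)) with (G n (1 / x) * nroot n x / INR n) by (field; lra).
  split; [|exact Hup].
  assert (HgA : A < 1 + g).
  { destruct (Rlt_le_dec A (1 + g)) as [|HgA]; auto. exfalso.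
    assert (INR n * (1 + g) ^ n <= INR n * A ^ n)
      by (apply Rmult_le_compat_l; [lra | apply pow_incr; lra]).
    assert (0 < INR n * (1 + g) ^ n) by (apply Rmult_lt_0_compat; [lra | apply pow_lt; lra]).
    assert (1 / (INR n * A ^ n) <= 1 / (INR n * (1 + g) ^ n))
      by (unfold Rdiv; rewrite !Rmult_1_l; apply Rinv_le_contravar; lra).
    lra. }
  eapply Rlt_le_trans; [|exact Hlo].
  replace (g / (1 + g)) with (1 - 1 / (1 + g)) by (field; lra).
  assert (1 / (1 + g) < eps); [|lra].
  apply (Rmult_lt_reg_r (1 + g)); [lra|]. unfold A in HgA.
  replace (1 / (1 + g) * (1 + g)) with 1 by (field; lra).
  replace 1 with (eps * (1 / eps)) at 1 by (field; lra).
  apply Rmult_lt_compat_l; lra.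
Qed.

Lemma G_ratio_lim :
  filterlim (fun x => G n (1 / x) / (INR n / nroot n x)) (at_right 0) (locally 1).
Proof.
  apply filterlim_locally. intros eps.
  destruct (G_ratio_near_1 eps (cond_pos eps)) as [delta [Hdelta Hnear]].
  exists (mkposreal delta Hdelta). intros x Hx Hx0. change (Rabs (x - 0) < delta) in Hx.
  rewrite Rminus_0_r, Rabs_pos_eq in Hx by lra.
  destruct (Hnear x ltac:(lra)). change (Rabs (G n (1 / x) / (INR n / nroot n x) - 1) < eps).
  rewrite Rabs_left1; lra.
Qed.

End GBounds.

Lemma G_1 y : G 1 y = y.
Proof. reflexivity. Qed.

Lemma nroot_1 x : 0 < x -> nroot 1 x = x.
Proof. intros. unfold nroot. simpl INR. replace (1 / 1) with 1 by field. apply Rpower_1; auto. Qed.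

Theorem corollary4p2 (n : nat) (Hn : (1 <= n)%nat) :
  (forall x : R, 0 < x <= 1 / 2 ->
     (x <= (1 / 2) ^ n ->
        INR n / Rpower x (1 / INR n) >= G n (1 / x) /\
        G n (1 / x) >= 1 / 2 * (INR n / Rpower x (1 / INR n))) /\
     (x > (1 / 2) ^ n ->
        2 * (ln (1 / x) / ln 2) >= G n (1 / x) /\
        G n (1 / x) >= 2 + ln (1 / (2 * x)))) /\
  filterlim (fun x => G n (1 / x) / (INR n / Rpower x (1 / INR n)))
            (at_right 0) (locally 1).
Proof.
  destruct n as [|[|m]]; [lia| |].
  - change (Rpower ?x (1 / INR 1)) with (nroot 1 x). split.
    + intros x Hx. rewrite G_1, nroot_1 by lra. simpl INR. simpl pow.
      assert (0 < 1 / x) by (apply Rdiv_lt_0_compat; lra).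
      split; intros; [split; apply Rle_ge | lra].
      * right. field. lra.
      * replace (1 / 1 / x) with (1 / x) by (field; lra). lra.
    + apply (filterlim_ext_loc (fun _ => 1)); [|apply filterlim_const].
      exists (mkposreal 1 Rlt_0_1). intros x _ Hx.
      rewrite G_1, nroot_1 by lra. simpl INR. field. lra.
  - assert (Hm : (1 <= S m)%nat) by lia.
    change (Rpower ?x (1 / INR (S (S m)))) with (nroot (S (S m)) x).
    split; [|apply G_ratio_lim; auto].
    intros x Hx. pose proof (pow_half_S_le (S m) Hm).
    split; intros Hxn; split; apply Rle_ge.
    + apply G_le_div_nroot; auto; lra.
    + apply G_ge_half_div_nroot; auto; lra.
    + apply G_le_two_log2; auto; lra.
    + apply G_ge_two_add_ln; auto.
Qed.
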